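(* Let $3\le q<\infty$ and let $G=(V,E,F)$ be a $q$-face regular plane tessellation with non-positive vertex curvature, $v_0\in V$, and let $\kappa_k$, $N$, $b_l$ be as in the context. Then for $0\le l\le N-1$ and $k\ge1$: $b_l-\kappa_k\ge2$ if $l=\frac{N-1}2\,(=0)$ and $q\in\{3,4\}$; $b_l-\kappa_k\ge1$ if $l\ne\frac{N-1}2$ or $q$ is even; $b_l-\kappa_k\ge0$ if $l=\frac{N-1}2\,(=1)$ and $q=5$; $b_l-\kappa_k\ge-1$ if $l=\frac{N-1}2$ and $q\ge7$ is odd.
   Context: A $q$-face regular plane tessellation is a locally tessellating planar graph (simple planar graph — no loops, multiple edges or degree-one vertices, finite degrees, locally finitely many faces — in which every edge lies in exactly two faces, two faces are disjoint or share exactly a vertex or an edge path, and every face is a closed topological disc, complement of an open disc, or closed half plane with boundary a path) in which every face has degree $q$. Vertex curvature: $\kappa(v)=1-\frac{|v|}2+\sum_{f\ni v}\frac1{|f|}$. With $d$ the combinatorial distance, $S_k=\{v:d(v_0,v)=k\}$, $\sigma_k=|S_k|$ and $\kappa_k=\frac{2q}{q-2}\cdot\frac1{\sigma_k}\sum_{v\in S_k}\kappa(v)$. $N=\frac{q-2}2$ if $q$ is even and $N=q-2$ if $q$ is odd. For $0\le l\le N-1$, $b_l=\frac4{q-2}$ except $b_l=\frac4{q-2}-2$ when $q$ is odd and $l=\frac{N-1}2$. *)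

From mathcomp Require Import all_boot all_order all_algebra.
Set Implicit Arguments. Unset Strict Implicit. Unset Printing Implicit Defensive.
Import Order.TTheory GRing.Theory Num.Theory.

(* A (combinatorial) q-face regular tessellation is given by
   - a vertex type [V]; [nbrs v] = the (finite, duplicate-free) list of neighbours of v;
   - a face type [F]; [bnd f : 'I_q -> V] = the boundary cycle of the face f
     (bnd f i adjacent to bnd f (ordS i));
   - [vfaces v] = the (finite, duplicate-free) list of faces containing v. *)

Section Tess.
Variables (V F : eqType) (q : nat) (nbrs : V -> seq V) (bnd : F -> 'I_q -> V)
          (vfaces : V -> seq F).

Definition adj (x y : V) : bool := y \in nbrs x.

Definition vdeg (v : V) : nat := size (nbrs v).

Definition onface (f : F) (v : V) : bool := [exists i, bnd f i == v].

Definition edge_in (f : F) (x y : V) : bool :=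
  [exists i, ((bnd f i == x) && (bnd f (ordS i) == y))
          || ((bnd f i == y) && (bnd f (ordS i) == x))].

Definition succn (i : 'I_q) (j : nat) : 'I_q := iter j (@ordS q) i.

Definition is_dist (x y : V) (k : nat) : Prop :=
  (exists p : seq V, path adj x p /\ last x p = y /\ size p = k) /\
  (forall p : seq V, path adj x p -> last x p = y -> k <= size p).

Definition q_face_regular_tessellation : Prop :=
  (forall x, uniq (nbrs x)) /\
  (forall x, x \notin nbrs x) /\
  (forall x y, adj x y = adj y x) /\
  (forall x, 1 < vdeg x) /\
  (forall x y, exists p : seq V, path adj x p /\ last x p = y) /\
  (forall f, injective (bnd f)) /\
  (forall f i, adj (bnd f i) (bnd f (ordS i))) /\
  (forall f g, (forall v, onface f v = onface g v) -> f = g) /\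
  (* locally finitely many faces: vfaces v lists the faces containing v *)
  (forall v, uniq (vfaces v)) /\
  (forall v f, (f \in vfaces v) = onface f v) /\
  (forall x y, adj x y -> exists f g, f != g /\ edge_in f x y /\ edge_in g x y /\
      forall h, edge_in h x y -> h = f \/ h = g) /\
  (* two faces are disjoint or share exactly a vertex or an edge path *)
  (forall f g, f != g ->
     (forall v, ~~ (onface f v && onface g v)) \/
     exists (i : 'I_q) (m : nat), m < q /\
       (forall v, (onface f v && onface g v) <->
                  exists j, j <= m /\ v = bnd f (succn i j)) /\
       (forall j, j < m -> edge_in g (bnd f (succn i j)) (bnd f (succn i j.+1))) /\
       (forall x y, edge_in f x y -> edge_in g x y ->
          exists j, j < m /\ ((x = bnd f (succn i j) /\ y = bnd f (succn i j.+1)) \/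
                              (y = bnd f (succn i j) /\ x = bnd f (succn i j.+1))))).


Local Open Scope ring_scope.

Definition vcurv (v : V) : rat :=
  1 - (vdeg v)%:R / 2 + \sum_(f <- vfaces v) (q%:R)^-1.

(* kappa_k, computed from a duplicate-free enumeration [s] of the sphere S_k *)
Definition kappa_sphere (s : seq V) : rat :=
  (2 * q%:R / (q%:R - 2)) * ((size s)%:R)^-1 * \sum_(v <- s) vcurv v.

End Tess.
Arguments q_face_regular_tessellation [V F] q nbrs bnd vfaces.

Definition Nq (q : nat) : nat := if odd q then (q - 2)%N else ((q - 2) %/ 2)%N.

(* b_l; the condition l = (N-1)/2 is written 2l+1 = N *)
Definition bl (q l : nat) : rat :=
  if odd q && (l.*2.+1 == Nq q) then (4 / (q%:R - 2) - 2)%R else (4 / (q%:R - 2))%R.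

(* Double counting the incidences between the edges and the faces at a vertex v (each face
   at v has two boundary edges at v, each edge lies in two faces) shows that v lies on exactly
   deg v faces, so kappa(v) = 1 - deg v / 2 + deg v / q depends only on the degree and decreases
   with it. Non-positive curvature then forces deg v >= 3, and deg v >= 4 when q = 5, whence
   kappa(v) <= 3/q - 1/2, resp. kappa(v) <= -1/5. Spheres of an infinite connected graph are
   non-empty and kappa_k is 2q/(q-2) times an average of vertex curvatures, so kappa_k <= 0,
   kappa_k <= 4/(q-2) - 1 and, for q = 5, kappa_k <= -2/3; comparing with b_l gives the bounds. *)

From mathcomp Require Import all_boot all_order all_algebra.
Import Order.TTheory GRing.Theory Num.Theory.
From mathcomp Require Import ring lra zify.
From Stdlib Require Import Classical.

Set Implicit Arguments.
Unset Strict Implicit.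
Unset Printing Implicit Defensive.

Lemma count_uniq_eq2 (T : eqType) (a : pred T) (s : seq T) (x y : T) :
  uniq s -> x != y -> (forall z, (z \in s) && a z = (z == x) || (z == y)) ->
  count a s = 2%N.
Proof.
move=> s_uniq neq_xy sa_xy; rewrite -size_filter -[2]/(size [:: x; y]).
apply/perm_size/uniq_perm; rewrite ?filter_uniq //= ?inE ?neq_xy // => z.
by rewrite mem_filter andbC sa_xy !inE.
Qed.

Lemma size_eq_regular_incidence (A B : eqType) (r : A -> B -> bool)
    (s : seq A) (t : seq B) (c : nat) :
  0 < c -> {in s, forall a, count (r a) t = c} ->
  {in t, forall b, count (r^~ b) s = c} -> size s = size t.
Proof.
move=> c_gt0 deg_s deg_t.
have count_sum (T : Type) (p : pred T) (u : seq T) :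
    count p u = \sum_(x <- u) p x by rewrite -sum1_count big_mkcond.
have : \sum_(a <- s) count (r a) t = \sum_(b <- t) count (r^~ b) s.
  rewrite (eq_bigr _ (fun a _ => count_sum _ _ _)) exchange_big /=.
  by apply: eq_bigr => b _; rewrite count_sum.
rewrite big_seq [RHS]big_seq (eq_bigr (fun=> c) deg_s).
rewrite (eq_bigr (fun=> c) deg_t) -!big_seq !big_const_seq !count_predT !iter_addn_0.
by move/eqP; rewrite eqn_mul2l eqn0Ngt c_gt0 => /eqP.
Qed.

Lemma ordS_ordS_neq (q : nat) (j : 'I_q) : 3 <= q -> ordS (ordS j) != j.
Proof.
move=> q_ge3; apply/eqP=> /(congr1 val) /=.
rewrite -addn1 modnDml -addn1 -addnA /= => /eqP.
rewrite -{2}(modn_small (ltn_ord j)) -{2}(addn0 j) eqn_modDl modn_small //.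
by rewrite mod0n.
Qed.

Section Spheres.
Variables (V : eqType) (nbrs : V -> seq V) (v0 : V).
Hypothesis adj_connected : forall x y, exists p, path (adj nbrs) x p /\ last x p = y.

Fixpoint ball (j : nat) : seq V :=
  if j is j'.+1 then ball j' ++ flatten (map nbrs (ball j')) else [:: v0].

Lemma ball_sub (j j' : nat) : j <= j' -> {subset ball j <= ball j'}.
Proof.
move/subnK <-; elim: (j' - j) => [|m IHm] x // /IHm x_in.
by rewrite addSn /= mem_cat x_in.
Qed.

Lemma ball_path (j : nat) (y : V) :
  y \in ball j -> exists2 p, path (adj nbrs) v0 p & last v0 p = y /\ size p <= j.
Proof.
elim: j y => [|j IHj] y /=; first by rewrite inE => /eqP->; exists [::].
rewrite mem_cat => /orP[/IHj[p p_path [p_last p_size]] | ].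
  by exists p => //; split; last exact: leqW.
case/flatten_mapP=> x /IHj[p p_path [p_last p_size]] xy.
exists (rcons p y); first by rewrite rcons_path p_path p_last.
by rewrite last_rcons size_rcons.
Qed.

Lemma path_ball (p : seq V) : path (adj nbrs) v0 p -> last v0 p \in ball (size p).
Proof.
elim/last_ind: p => [|p x IHp]; first by rewrite mem_head.
rewrite rcons_path last_rcons size_rcons => /andP[p_path px] /=.
by rewrite mem_cat; apply/orP; right; apply/flatten_mapP; exists (last v0 p); first exact: IHp.
Qed.

Lemma shortest_path (y : V) :
  exists2 p, path (adj nbrs) v0 p & last v0 p = y /\
    forall p', path (adj nbrs) v0 p' -> last v0 p' = y -> size p <= size p'.
Proof.
have in_ball : exists j, y \in ball j.
  have [p [p_path p_last]] := adj_connected v0 y.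
  by exists (size p); rewrite -p_last path_ball.
have [n /ball_path[p p_path [p_last p_size]] n_min] := find_ex_minn in_ball.
exists p => //; split=> // p' p'_path p'_last.
by apply: leq_trans p_size (n_min _ _); rewrite -p'_last path_ball.
Qed.

Lemma sphere_nonempty (k : nat) :
  ~ (exists s : seq V, forall v, v \in s) -> exists x, is_dist nbrs v0 x k.
Proof.
move=> infinite.
have [y y_far] : exists y, y \notin ball k.
  apply: NNPP => all_near; apply: infinite; exists (ball k) => v.
  by apply/negPn/negP => v_far; apply: all_near; exists v.
have [p p_path [p_last p_min]] := shortest_path y.
have k_le_p : k <= size p.
  rewrite leqNgt; apply: contra y_far => p_short.
  by rewrite -p_last (ball_sub (ltnW p_short) (path_ball p_path)).
move: p_path; rewrite -(cat_take_drop k p) cat_path => /andP[pre_path post_path].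
exists (last v0 (take k p)); split; first by exists (take k p); rewrite size_takel.
move=> p' p'_path p'_last; rewrite leqNgt; apply/negP => p'_short.
have := p_min (p' ++ drop k p).
rewrite cat_path p'_path last_cat p'_last post_path -last_cat cat_take_drop size_cat size_drop.
by move/(_ isT p_last); lia.
Qed.
End Spheres.

Local Open Scope ring_scope.

Definition curv_of_deg {R : realFieldType} (q d : nat) : R :=
  1 - d%:R / 2 + d%:R / q%:R.

Section CurvOfDeg.
Variables (R : realFieldType) (q : nat).
Hypothesis q_ge2 : (2 <= q)%N.

Lemma curv_of_deg_nonincr : {homo (@curv_of_deg R q) : d d' / (d <= d')%N >-> d' <= d}.
Proof.
move=> d d' le_dd'.
have curvE (x : nat) : curv_of_deg q x = 1 - x%:R * (2^-1 - q%:R^-1) :> R.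
  by rewrite /curv_of_deg; ring.
have inv_q : q%:R^-1 <= 2^-1 :> R by rewrite lef_pV2 ?posrE ?ler_nat ?ltr0n // (leq_trans _ q_ge2).
by rewrite !curvE lerB // ler_wpM2r ?subr_ge0 ?ler_nat.
Qed.

Lemma curv_of_deg_nonpos_le (d m : nat) :
  curv_of_deg q d <= 0 :> R -> 0 < curv_of_deg q m :> R ->
  curv_of_deg q d <= curv_of_deg q m.+1 :> R.
Proof.
move=> d_nonpos m_pos; apply: curv_of_deg_nonincr; rewrite ltnNge.
by apply: contraTN d_nonpos => /curv_of_deg_nonincr le_md; rewrite -ltNge (lt_le_trans m_pos).
Qed.
End CurvOfDeg.

Lemma curv_of_deg_nonpos_le3 (R : realFieldType) (q d : nat) :
  (2 < q)%N -> curv_of_deg q d <= 0 :> R -> curv_of_deg q d <= curv_of_deg q 3 :> R.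
Proof.
move=> q_gt2 d_nonpos; apply: curv_of_deg_nonpos_le d_nonpos _; first exact: ltnW.
have : 0 < q%:R^-1 :> R by rewrite invr_gt0 ltr0n (ltn_trans _ q_gt2).
by rewrite /curv_of_deg; lra.
Qed.

Lemma curv_of_deg5_nonpos_le4 (R : realFieldType) (d : nat) :
  curv_of_deg 5 d <= 0 :> R -> curv_of_deg 5 d <= curv_of_deg 5 4 :> R.
Proof.
by move=> d_nonpos; apply: curv_of_deg_nonpos_le d_nonpos _ => //; rewrite /curv_of_deg; lra.
Qed.

Section Tessellation.
Variables (V F : eqType) (q : nat) (nbrs : V -> seq V) (bnd : F -> 'I_q -> V)
  (vfaces : V -> seq F).
Hypotheses (q_ge3 : (3 <= q)%N) (tess : q_face_regular_tessellation q nbrs bnd vfaces).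

Lemma count_face_edges_at (v : V) (f : F) :
  f \in vfaces v -> count (edge_in bnd f v) (nbrs v) = 2%N.
Proof.
have [nbrs_uniq [_ [adj_sym [_ [_ [bnd_inj [bnd_adj [_ [_ [vfacesE _]]]]]]]]]] := tess.
rewrite vfacesE => /existsP[i /eqP bnd_i].
pose j := ord_pred i; have ordS_j : ordS j = i by rewrite ord_predK.
apply: (count_uniq_eq2 (x := bnd f (ordS i)) (y := bnd f j)) => //.
  by apply/eqP=> /bnd_inj eq_ij; move: (ordS_ordS_neq j q_ge3); rewrite ordS_j eq_ij eqxx.
move=> w; apply/andP/idP => [[_ /existsP[k /orP[]]] | ].
- case/andP=> /eqP; rewrite -bnd_i => /bnd_inj -> /eqP <-.
  by rewrite eqxx.
- case/andP=> /eqP <- /eqP; rewrite -bnd_i -ordS_j => /bnd_inj/ordS_inj ->.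
  by rewrite eqxx orbT.
case/orP=> /eqP->; split.
- by rewrite -bnd_i; apply: bnd_adj.
- by apply/existsP; exists i; rewrite bnd_i !eqxx.
- by rewrite -[_ \in _]/(adj nbrs _ _) adj_sym -bnd_i -ordS_j; apply: bnd_adj.
- by apply/existsP; exists j; rewrite ordS_j bnd_i !eqxx orbT.
Qed.

Lemma count_edge_faces (v w : V) :
  w \in nbrs v -> count (fun f => edge_in bnd f v w) (vfaces v) = 2%N.
Proof.
have [_ [_ [_ [_ [_ [_ [_ [_ [vfaces_uniq [vfacesE [edge2 _]]]]]]]]]]] := tess.
move=> vw; have [f [g [neq_fg [vw_f [vw_g vw_fg]]]]] := edge2 v w vw.
have edge_vfaces h : edge_in bnd h v w -> h \in vfaces v.
  rewrite vfacesE => /existsP[j /orP[] /andP[/eqP vj /eqP wj]].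
  - by apply/existsP; exists j; apply/eqP.
  - by apply/existsP; exists (ordS j); apply/eqP.
apply: (count_uniq_eq2 (x := f) (y := g)) => // h; apply/andP/idP => [[_ /vw_fg] | ].
  by case=> ->; rewrite eqxx ?orbT.
by case/orP=> /eqP-> ; split => //; apply: edge_vfaces.
Qed.

Lemma vdeg_vfaces (v : V) : vdeg nbrs v = size (vfaces v).
Proof.
symmetry; apply: (size_eq_regular_incidence (r := fun f w => edge_in bnd f v w) (c := 2%N)) => //.
- exact: count_face_edges_at.
- exact: count_edge_faces.
Qed.

Lemma vcurvE (v : V) :
  vcurv q nbrs vfaces v = curv_of_deg q (vdeg nbrs v).
Proof.
rewrite /vcurv big_const_seq count_predT iter_addr_0 vdeg_vfaces.
by congr (_ + _); rewrite mulr_natl.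
Qed.

End Tessellation.

Lemma mean_le (R : numFieldType) (T : eqType) (f : T -> R) (s : seq T) (B : R) :
  s != [::] -> {in s, forall x, f x <= B} -> (size s)%:R^-1 * \sum_(x <- s) f x <= B.
Proof.
move=> s_nonempty f_le.
have size_gt0 : 0 < (size s)%:R :> R by rewrite ltr0n lt0n size_eq0.
have sum_le : \sum_(x <- s) f x <= \sum_(x <- s) B by rewrite !big_seq ler_sum.
rewrite big_const_seq count_predT iter_addr_0 -mulr_natl in sum_le.
rewrite -(mulKf (lt0r_neq0 size_gt0) B).
by apply: ler_wpM2l sum_le; rewrite invr_ge0 ltW.
Qed.

Lemma kappa_sphere_le (V F : eqType) (q : nat) (nbrs : V -> seq V) (vfaces : V -> seq F)
    (s : seq V) (B : rat) :
  (3 <= q)%N -> s != [::] -> (forall v, vcurv q nbrs vfaces v <= B) ->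
  kappa_sphere q nbrs vfaces s <= 2 * q%:R / (q%:R - 2) * B.
Proof.
move=> q_ge3 s_nonempty curv_le; rewrite /kappa_sphere -mulrA.
apply: ler_wpM2l; last by apply: mean_le => // v _.
have q_gt2 : 2 < q%:R :> rat by rewrite (ltr_nat _ 2).
by rewrite divr_ge0 ?mulr_ge0 ?subr_ge0 ?ltW // (lt_trans _ q_gt2).
Qed.

Section NonpositiveCurvature.
Variables (V F : eqType) (q : nat) (nbrs : V -> seq V) (bnd : F -> 'I_q -> V)
  (vfaces : V -> seq F) (s : seq V).
Hypotheses (q_ge3 : (3 <= q)%N) (tess : q_face_regular_tessellation q nbrs bnd vfaces).
Hypotheses (curv_nonpos : forall v, vcurv q nbrs vfaces v <= 0) (s_nonempty : s != [::]).

Let kappa_le_curv_of_deg (B : rat) : (forall v, curv_of_deg q (vdeg nbrs v) <= B) ->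
  kappa_sphere q nbrs vfaces s <= 2 * q%:R / (q%:R - 2) * B.
Proof. by move=> curv_le; apply: kappa_sphere_le => // v; rewrite (vcurvE q_ge3 tess). Qed.

Let curv_of_deg_nonpos v : curv_of_deg q (vdeg nbrs v) <= 0 :> rat.
Proof. by rewrite -(vcurvE q_ge3 tess). Qed.

Lemma kappa_sphere_nonpos : kappa_sphere q nbrs vfaces s <= 0.
Proof. by rewrite -(mulr0 (2 * q%:R / (q%:R - 2))); apply: kappa_le_curv_of_deg. Qed.

Lemma kappa_sphere_le_deg3 : kappa_sphere q nbrs vfaces s <= 4 / (q%:R - 2) - 1.
Proof.
have q_gt2 : 2 < q%:R :> rat by rewrite (ltr_nat _ 2).
have -> : 4 / (q%:R - 2) - 1 = 2 * q%:R / (q%:R - 2) * curv_of_deg q 3 :> rat.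
  by rewrite /curv_of_deg; field; apply/andP; split; apply/eqP; lra.
by apply: kappa_le_curv_of_deg => v; apply: curv_of_deg_nonpos_le3.
Qed.

Lemma kappa_sphere_le_q5 : q = 5%N -> kappa_sphere q nbrs vfaces s <= - 2 / 3.
Proof.
move=> q5; have -> : - 2 / 3 = 2 * q%:R / (q%:R - 2) * curv_of_deg q 4 :> rat.
  by rewrite q5 /curv_of_deg; field.
by apply: kappa_le_curv_of_deg => v; rewrite q5 curv_of_deg5_nonpos_le4 // -q5.
Qed.

End NonpositiveCurvature.

Theorem lemma5 (V F : eqType) (q : nat) (nbrs : V -> seq V) (bnd : F -> 'I_q -> V)
    (vfaces : V -> seq F) (v0 : V) :
  (3 <= q)%N ->
  q_face_regular_tessellation q nbrs bnd vfaces ->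
  ~ (exists s : seq V, forall v, v \in s) ->
  (forall v, (vcurv q nbrs vfaces v <= 0)%R) ->
  forall (l k : nat), (l < Nq q)%N -> (1 <= k)%N ->
  forall s : seq V, uniq s -> (forall v, v \in s <-> is_dist nbrs v0 v k) ->
  let d := (bl q l - kappa_sphere q nbrs vfaces s)%R in
  ((l.*2.+1 == Nq q) && ((q == 3) || (q == 4)) -> (2 <= d)%R) /\
  ((l.*2.+1 != Nq q) || ~~ odd q -> (1 <= d)%R) /\
  ((l.*2.+1 == Nq q) && (q == 5) -> (0 <= d)%R) /\
  ((l.*2.+1 == Nq q) && (7 <= q)%N && odd q -> (-1 <= d)%R).
Proof.
move=> q_ge3 tess infinite curv_nonpos l k _ _ s _ sphereP d.
have s_nonempty : s != [::].
  have [_ [_ [_ [_ [connected _]]]]] := tess.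
  have [x /sphereP] := sphere_nonempty v0 connected k infinite.
  by apply: contraTneq => ->.
have kappa_nonpos := kappa_sphere_nonpos q_ge3 tess curv_nonpos s_nonempty.
have kappa_le_deg3 := kappa_sphere_le_deg3 q_ge3 tess curv_nonpos s_nonempty.
have kappa_le_q5 := kappa_sphere_le_q5 q_ge3 tess curv_nonpos s_nonempty.
rewrite /d; split; [|split; [|split]].
- case/andP=> mid q34; have -> : bl q l = 2 by rewrite /bl mid; case/orP: q34 => /eqP->.
  lra.
- move=> not_mid; have -> : bl q l = 4 / (q%:R - 2).
    by rewrite /bl; case: (odd q) not_mid => //=; rewrite orbF => /negbTE->.
  lra.
- case/andP=> mid /eqP q5; have -> : bl q l = - 2 / 3 by rewrite /bl mid q5.
  by move: (kappa_le_q5 q5); lra.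
- by case/andP=> /andP[mid _] odd_q; rewrite /bl mid odd_q /=; lra.
Qed.
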